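(* Set $L = (n-1)(r-1) +1$. Then the following equality holds in $E_n(L)$: \begin{equation*} \sum_{k = 0}^L(-1)^k\begin{bmatrix} L \\ k \end{bmatrix}(k, 0, \dots, 0, L - k) = 0. \end{equation*}
   Context: Let $q$ be an indeterminate, $[n] = \frac{q^n - q^{-n}}{q - q^{-1}}$ for $n \in \mathbb{Z}$, $[m]^! = [1]\cdots[m]$, and for $n \in \mathbb{Z}$, $m \in \mathbb{N}$, $\begin{bmatrix} n \\ m\end{bmatrix} = \frac{[n][n-1]\cdots[n-m+1]}{[m]^!}$ for $m \ge 1$, $\begin{bmatrix} n \\ 0\end{bmatrix} = 1$. Fix an integer $r \ge 2$ and $n \ge 2$. Let $V_n$ be the vector space over $\mathbb{Q}(q)$ spanned by symbols $a = (a_1, \dots, a_n) \in \mathbb{N}^n$ subject to the relations: for $1 \le i \le n-1$, if $a_i \ge r$ then $\sum_{0 \le j \le r}(-1)^j\begin{bmatrix} r \\ j\end{bmatrix} a(j) = 0$, where $a(j) = (a_1, \dots, a_{i-1}, a_i - j, a_{i+1} + j, a_{i+2}, \dots, a_n)$. For $m \ge 1$, $E_n(m)$ denotes the subspace of $V_n$ spanned by $\{ a = (a_1, \dots, a_n) \mid \sum_i a_i = m,\ a_i \in [0, r-1] \text{ for } 1 \le i < n\}$; every $a \in V_n$ with $\sum a_i = m$ lies in $E_n(m)$. *)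

From HB Require Import structures.
From mathcomp Require Import all_boot all_order all_algebra fraction.
Set Implicit Arguments. Unset Strict Implicit. Unset Printing Implicit Defensive.
Import Order.TTheory GRing.Theory Num.Theory.
Local Open Scope ring_scope.

Definition Qq : fieldType := {fraction {poly rat}}.
Definition qv : Qq := FracField.tofrac 'X.

Definition qint (n : int) : Qq := (qv ^ n - qv ^ (- n)) / (qv - qv^-1).

Definition qfact (m : nat) : Qq := \prod_(j < m) qint (j.+1)%:Z.

Definition qbinom (n : int) (m : nat) : Qq :=
  if m == 0%N then 1 else (\prod_(j < m) qint (n - j%:Z)) / qfact m.

(* symbols a = (a_1,...,a_n) in N^n, indexed from 0 *)
Definition pt (n : nat) := {ffun 'I_n -> nat}.

(* formal linear combinations of symbols (elements of the free Q(q)-space on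
   N^n), represented by their coefficient functions *)
Definition fcomb (n : nat) := pt n -> Qq.

Definition sym n (a : pt n) : fcomb n := fun b => (b == a)%:R.

(* a(j) for position i (0-based; the paper's i+1), i.e. a_i - j at i,
   a_{i+1} + j at i+1 *)
Definition shift n (a : pt n) (i : 'I_n) (j : nat) : pt n :=
  [ffun k : 'I_n => if k == i then (a k - j)%N
                    else if val k == (val i).+1 then (a k + j)%N else a k].

Definition relvec n (r : nat) (a : pt n) (i : 'I_n) : fcomb n :=
  fun b => \sum_(j < r.+1) (-1) ^+ j * qbinom r%:Z j * sym (shift a i j) b.

(* admissible relation: 1 <= i <= n-1 (paper indexing), a_i >= r *)
Definition admissible n (r : nat) (a : pt n) (i : 'I_n) : bool :=
  ((val i).+1 < n)%N && (r <= a i)%N.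

(* f is zero in V_n: f lies in the span of the defining relations *)
Definition zero_in_V n (r : nat) (f : fcomb n) : Prop :=
  exists s : seq (Qq * (pt n * 'I_n)),
    all (fun t => admissible r t.2.1 t.2.2) s /\
    forall b, f b = \sum_(t <- s) t.1 * relvec r t.2.1 t.2.2 b.

Definition endpt n (k m : nat) : pt n :=
  [ffun t : 'I_n => if val t == 0%N then k
                    else if val t == n.-1 then m else 0%N].

From HB Require Import structures.
From mathcomp Require Import all_boot all_order all_algebra fraction.
From mathcomp Require Import ring zify.
From mathcomp.multinomials Require Import mpoly.
Import Order.TTheory GRing.Theory Num.Theory.
Local Open Scope ring_scope.
Set Implicit Arguments. Unset Strict Implicit. Unset Printing Implicit Defensive.

(* Sending the symbol a to the monomial x^a identifies V_n with the quotient of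
   Q(q)[x_1, ..., x_n] by the ideal J generated by the forms
   S_r(x_i, x_(i+1)), where S_m(x, y) = sum_j (-1)^j [m; j] x^(m-j) y^j, and the
   claim becomes S_L(x_n, x_1) \in J. By Gauss' q-binomial theorem
   S_m(x, y) = prod_(s<m) (x - q^(2s+1-m) y) = g_m(x, q^(1-m) y), where
   g_m(x, c) = prod_(s<m) (x - q^(2s) c). As a q-analogue of
   (x - c)^N \in ((x - b)^a (b - c)^(N-a) | a <= N), g_N(x, c) lies in every
   ideal containing all g_a(x, b) g_(N-a)(b, c). Induction on k then puts
   g_(k(r-1)+1)(x_(k+1), q^(-k(r-1)) x_1) in J, with b = q^(1-r) x_k: for a >= r
   the first factor is a multiple of S_r(x_(k+1), x_k), a unit times a generator,
   and for a < r the second factor is a multiple of a rescaled instance of the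
   induction hypothesis. For k = n - 1 this is S_L(x_n, x_1). *)

Lemma qv_neq0 : qv != 0.
Proof. by rewrite /qv tofrac_eq0 polyX_eq0. Qed.

Lemma qvXn_neq1 k : (0 < k)%N -> qv ^+ k != 1.
Proof.
move=> k_gt0; rewrite /qv -tofracXn -tofrac1 tofrac_eq.
apply: contraTneq k_gt0 => Xk1.
by have := congr1 (fun p : {poly rat} => size p) Xk1; rewrite /= size_polyXn size_poly1 => -[->].
Qed.

Lemma qvz_neq0 (e : int) : qv ^ e != 0.
Proof. by rewrite expfz_eq0 negb_and qv_neq0 orbT. Qed.

Lemma qv_subV_neq0 : qv - qv^-1 != 0.
Proof.
rewrite subr_eq0; apply: contraNneq (@qvXn_neq1 2 isT) => qvV.
by rewrite expr2 [X in X * _]qvV mulVf ?qv_neq0.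
Qed.

Lemma qint_neq0 k : (0 < k)%N -> qint k%:Z != 0.
Proof.
move=> k_gt0; rewrite /qint; apply: mulf_neq0; last by rewrite invr_neq0 // qv_subV_neq0.
rewrite subr_eq0 -exprnP -exprnN.
have kk_gt0 : (0 < k + k)%N by lia.
apply: contraNneq (qvXn_neq1 kk_gt0) => qvk.
by rewrite exprD [X in X * _]qvk mulVf // expf_neq0 ?qv_neq0.
Qed.

Lemma qint0 : qint 0 = 0.
Proof. by rewrite /qint oppr0 subrr mul0r. Qed.

Lemma qintE (e : int) : qint e = (qv ^ e - (qv ^ e)^-1) / (qv - qv^-1).
Proof. by rewrite /qint invr_expz. Qed.

Lemma qintD (a b : int) : qint (a + b) = (qv ^ a)^-1 * qint b + qv ^ b * qint a.
Proof.
rewrite !qintE (expfzDr _ _ qv_neq0).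
have sum_rule (F : fieldType) (x y d : F) : d != 0 -> y != 0 -> x != 0 ->
    (x * y - (x * y)^-1) / d = x^-1 * ((y - y^-1) / d) + y * ((x - x^-1) / d).
  by move=> d0 y0 x0; field; rewrite d0 x0 y0.
exact: sum_rule (qv_subV_neq0) (qvz_neq0 b) (qvz_neq0 a).
Qed.

Lemma qfact_neq0 j : qfact j != 0.
Proof. by apply/prodf_neq0 => i _; apply: qint_neq0. Qed.

Lemma qbinomE (m : int) j : qbinom m j = (\prod_(i < j) qint (m - i%:Z)) / qfact j.
Proof. by rewrite /qbinom; case: eqP => // ->; rewrite /qfact !big_ord0 invr1 mulr1. Qed.

Lemma qbinom_succ_self (m : nat) : qbinom m%:Z m.+1 = 0.
Proof. by rewrite qbinomE big_ord_recr /= subrr qint0 mulr0 mul0r. Qed.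

Lemma qbinomS (m j : nat) :
  qbinom m.+1%:Z j.+1 =
    qv ^ (- j.+1%:Z) * qbinom m%:Z j.+1 + qv ^ (m%:Z - j%:Z) * qbinom m%:Z j.
Proof.
rewrite !qbinomE big_ord_recl big_ord_recr /= /qfact big_ord_recr /= -/(qfact j).
rewrite (eq_bigr (fun i : 'I_j => qint (m%:Z - i%:Z))); last first.
  by move=> i _; congr qint; rewrite /bump /=; lia.
rewrite (_ : _ - _ = j.+1%:Z + (m%:Z - j%:Z)); last by lia.
rewrite qintD -invr_expz.
have pascal_rule (F : fieldType) (x b y c P p : F) : c != 0 -> p != 0 ->
    (x * b + y * c) * P / (p * c) = x * (P * b / (p * c)) + y * (P / p).
  by move=> c0 p0; field; rewrite c0 p0.
exact: pascal_rule (qint_neq0 (ltn0Sn j)) (qfact_neq0 j).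
Qed.

Section QBinomial.

Variables (R : comPzRingType) (f : {rmorphism Qq -> R}).

Definition qpow (e : int) : R := f (qv ^ e).

Lemma qpowD a b : qpow (a + b) = qpow a * qpow b.
Proof. by rewrite /qpow (expfzDr _ _ qv_neq0) rmorphM. Qed.

Lemma qpow0 : qpow 0 = 1.
Proof. by rewrite /qpow expr0z rmorph1. Qed.

Lemma qpowN1X (j : nat) : qpow (-1) ^+ j = qpow (- j%:Z).
Proof.
elim: j => [|j IH]; first by rewrite expr0 qpow0.
by rewrite exprS IH -qpowD; congr qpow; lia.
Qed.

Definition qbinom_form m (x y : R) : R :=
  \sum_(j < m.+1) f ((-1) ^+ j * qbinom m%:Z j) * (x ^+ (m - j) * y ^+ j).

Definition qbinom_prod m (x y : R) : R :=
  \prod_(s < m) (x - qpow (2 * s%:Z + 1 - m%:Z) * y).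

Definition qpoch m (x c : R) : R := \prod_(s < m) (x - qpow (2 * s%:Z) * c).

Lemma qbinom_prodS m x y :
  qbinom_prod m.+1 x y = qbinom_prod m x (qpow (-1) * y) * (x - qpow m%:Z * y).
Proof.
rewrite /qbinom_prod big_ord_recr /=; congr (_ * (x - qpow _ * y)); last by lia.
by apply: eq_bigr => s _; rewrite mulrA -qpowD; congr (x - qpow _ * y); lia.
Qed.

Lemma qbinomial m x y : qbinom_form m x y = qbinom_prod m x y.
Proof.
elim: m x y => [|m IH] x y.
  by rewrite /qbinom_form /qbinom_prod big_ord1 big_ord0 /= !expr0 !mulr1 rmorph1.
rewrite qbinom_prodS -IH /qbinom_form mulr_suml.
pose A j := f ((-1) ^+ j * qbinom m%:Z j).
pose U j := A j * qpow (- j%:Z) * (x ^+ (m - j).+1 * y ^+ j).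
pose V j := A j * qpow (m%:Z - j%:Z) * (x ^+ (m - j) * y ^+ j.+1).
pose W j := f ((-1) ^+ j.+1 * qbinom m%:Z j.+1) * qpow (- j.+1%:Z)
              * (x ^+ (m - j) * y ^+ j.+1).
have expand_prev (j : 'I_m.+1) :
    A j * (x ^+ (m - j) * (qpow (-1) * y) ^+ j) * (x - qpow m%:Z * y) = U j - V j.
  rewrite /U /V exprMn qpowN1X.
  rewrite (_ : qpow (_ - _) = qpow (- j%:Z) * qpow m%:Z); last by rewrite -qpowD; congr qpow; lia.
  by rewrite !exprS; ring.
have pascal (j : 'I_m.+1) :
    f ((-1) ^+ j.+1 * qbinom m.+1%:Z j.+1) * (x ^+ (m.+1 - j.+1) * y ^+ j.+1) = W j - V j.
  rewrite /W /V /A qbinomS subSS /qpow.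
  by rewrite !rmorphM rmorphD !rmorphM !rmorphXn rmorphN rmorph1 exprS; ring.
rewrite (eq_bigr _ (fun j _ => expand_prev j)) sumrB.
rewrite big_ord_recl /= (eq_bigr _ (fun j _ => pascal (j : 'I_m.+1))) sumrB addrA.
congr (_ - _).
rewrite big_ord_recr /= /W qbinom_succ_self mulr0 rmorph0 !mul0r addr0.
rewrite [in RHS]big_ord_recl /= /U /A qpow0 !expr0 !subn0 !mulr1 rmorph1 mul1r.
congr (_ + _); apply: eq_bigr => j _; rewrite /bump /=.
by rewrite (_ : (m - j.+1).+1 = m - j)%N //; have := ltn_ord j; lia.
Qed.

Lemma qbinom_prodE m x y : qbinom_prod m x y = qpoch m x (qpow (1 - m%:Z) * y).
Proof.
apply: eq_bigr => s _; rewrite mulrA -qpowD.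
by congr (x - qpow _ * y); lia.
Qed.

Lemma qbinom_prodC m x y : exists t, qbinom_prod m y x = t * qbinom_prod m x y.
Proof.
exists (\prod_(s < m) - qpow (- (2 * s%:Z + 1 - m%:Z))).
rewrite /qbinom_prod -big_split /= (reindex_inj rev_ord_inj) /=.
apply: eq_bigr => s _.
rewrite (_ : 2 * _ + 1 - _ = - (2 * s%:Z + 1 - m%:Z)); last by have := ltn_ord s; lia.
have qpowNK : qpow (- (2 * s%:Z + 1 - m%:Z)) * qpow (2 * s%:Z + 1 - m%:Z) = 1.
  by rewrite -qpowD addNr qpow0.
move: qpowNK; move: (qpow (- _)) (qpow (_ - _)) => u v uv.
have -> : y - u * x = - u * (x - v * y) + (1 - u * v) * y by ring.
by rewrite uv subrr mul0r addr0.
Qed.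

Lemma qpochS m x c : qpoch m.+1 x c = qpoch m x c * (x - qpow (2 * m%:Z) * c).
Proof. by rewrite /qpoch big_ord_recr. Qed.

Lemma qpoch_dvd a b x c : (a <= b)%N -> exists t, qpoch b x c = qpoch a x c * t.
Proof.
move/subnKC <-; elim: (b - a)%N => [|k [t IH]]; first by exists 1; rewrite addn0 mulr1.
by exists (t * (x - qpow (2 * (a + k)%:Z) * c)); rewrite addnS qpochS IH mulrA.
Qed.

Lemma qpochZ m d x c : qpoch m (d * x) (d * c) = d ^+ m * qpoch m x c.
Proof.
have -> : d ^+ m = \prod_(s < m) d by rewrite prodr_const card_ord.
rewrite /qpoch -big_split /=.
by apply: eq_bigr => s _; ring.
Qed.

Definition is_ideal (J : R -> Prop) :=
  [/\ J 0, forall a b, J a -> J b -> J (a + b) & forall t a, J a -> J (t * a)].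

Lemma qpoch_mem_ideal_split (J : R -> Prop) N x b c : is_ideal J ->
  (forall a, (a <= N)%N -> J (qpoch a x b * qpoch (N - a) b c)) -> J (qpoch N x c).
Proof.
elim: N J => [|N IH] J [J0 JD JM] split_mem.
  by have := split_mem 0%N (leqnn 0); rewrite /qpoch !big_ord0 mulr1.
(* induction on N, applied to the colon ideal (J : x - q^(2N) c) *)
pose J' z := J (z * (x - qpow (2 * N%:Z) * c)).
have J'_ideal : is_ideal J'.
  split; rewrite /J'; first by rewrite mul0r.
    by move=> u v Ju Jv; rewrite mulrDl; apply: JD.
  by move=> t u Ju; rewrite -mulrA; apply: JM.
rewrite qpochS; apply: (IH J' J'_ideal) => a le_aN; rewrite /J'.
(* x - q^(2N) c = (x - q^(2a) b) + q^(2a) (b - q^(2(N-a)) c) *)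
have -> : qpoch a x b * qpoch (N - a) b c * (x - qpow (2 * N%:Z) * c) =
    qpoch a.+1 x b * qpoch (N.+1 - a.+1) b c
    + qpow (2 * a%:Z) * (qpoch a x b * qpoch (N.+1 - a) b c).
  rewrite subSS subSn // !qpochS.
  rewrite (_ : qpow (2 * N%:Z) = qpow (2 * a%:Z) * qpow (2 * (N - a)%:Z)); last first.
    by rewrite -qpowD; congr qpow; lia.
  ring.
by apply: JD; [apply: split_mem | apply/JM/split_mem/leqW].
Qed.

Lemma qpoch_chain_mem_ideal (J : R -> Prop) (X : nat -> R) r n :
  is_ideal J ->
  (forall i, (i.+1 < n)%N -> J (qbinom_prod r (X i) (X i.+1))) ->
  forall k, (k < n)%N ->
  J (qpoch (k * (r - 1) + 1) (X k) (qpow (- (k%:Z * (r%:Z - 1))) * X 0%N)).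
Proof.
move=> J_ideal gen_mem; have [J0 _ JM] := J_ideal.
elim=> [|k IH] lt_kn.
  by rewrite mul0n /qpoch big_ord1 /= mulr0 mul0r oppr0 qpow0 !mul1r subrr.
set N := (k.+1 * (r - 1) + 1)%N.
set b := qpow (- (r%:Z - 1)) * X k.
apply: (qpoch_mem_ideal_split (x := X k.+1) (b := b) J_ideal) => a le_aN.
have [le_ra | lt_ar] := leqP r a.
  have [t ->] := qpoch_dvd (X k.+1) b le_ra.
  have -> : qpoch r (X k.+1) b = qbinom_prod r (X k.+1) (X k).
    by rewrite qbinom_prodE /b; congr (qpoch r _ (qpow _ * _)); lia.
  have [t' ->] := qbinom_prodC r (X k) (X k.+1).
  by rewrite -!mulrA mulrCA mulrC; apply/JM/gen_mem; lia.
have le_IH_Na : (k * (r - 1) + 1 <= N - a)%N by rewrite /N; lia.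
have [t ->] := qpoch_dvd b (qpow (- (k.+1%:Z * (r%:Z - 1))) * X 0%N) le_IH_Na.
rewrite (_ : qpow _ * X 0%N = qpow (- (r%:Z - 1)) * (qpow (- (k%:Z * (r%:Z - 1))) * X 0%N)).
  by rewrite /b qpochZ mulrAC mulrA; apply/JM/IH; lia.
by rewrite mulrA -qpowD; congr (qpow _ * _); lia.
Qed.

End QBinomial.

Definition mnm_of_pt n (b : pt n) : 'X_{1..n} := [multinom b i | i < n].

Lemma mnm_of_ptE n (b : pt n) k : mnm_of_pt b k = b k.
Proof. exact: mnmE. Qed.

Lemma mnm_of_pt_inj n : injective (@mnm_of_pt n).
Proof. by move=> b1 b2 eq_b; apply/ffunP => k; rewrite -!mnm_of_ptE eq_b. Qed.

Definition coeff_comb n (p : {mpoly Qq[n]}) : fcomb n := fun b => p@_(mnm_of_pt b).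

Definition pt_add n (a : pt n) (m : 'X_{1..n}) : pt n := [ffun k => (a k + m k)%N].
Definition pt_sub n (b : pt n) (m : 'X_{1..n}) : pt n := [ffun k => (b k - m k)%N].

Lemma coeff_combXM n (m : 'X_{1..n}) p b :
  coeff_comb ('X_[m] * p) b =
    if (m <= mnm_of_pt b)%MM then coeff_comb p (pt_sub b m) else 0.
Proof.
rewrite /coeff_comb; case: ifP => le_mb.
  have -> : mnm_of_pt b = (m + mnm_of_pt (pt_sub b m))%MM.
    apply/mnmP => k; rewrite mnmDE !mnm_of_ptE ffunE subnKC //.
    by have := mnm_lepP le_mb k; rewrite mnm_of_ptE.
  by rewrite mulrC mcoeffMX.
apply/eqP; rewrite mcoeff_eq0 mulrC (perm_mem (msuppMX p m)).
apply: contraFN le_mb => /mapP [m' _ ->].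
by apply/mnm_lepP => k; rewrite mnmDE leq_addr.
Qed.

Lemma shift_pt_add n (a : pt n) m i j :
  (j <= a i)%N -> shift (pt_add a m) i j = pt_add (shift a i j) m.
Proof.
move=> le_ja; apply/ffunP => k; rewrite !ffunE.
by case: eqP => [->|_]; [lia | case: eqP => _; lia].
Qed.

Lemma sym_pt_add n (s b : pt n) m :
  sym (pt_add s m) b = if (m <= mnm_of_pt b)%MM then sym s (pt_sub b m) else 0.
Proof.
rewrite /sym; case: ifP => le_mb.
  congr (nat_of_bool _)%:R; apply/eqP/eqP => [->|<-]; apply/ffunP => k; rewrite !ffunE.
    by rewrite addnK.
  by rewrite subnK //; have := mnm_lepP le_mb k; rewrite mnm_of_ptE.
case: eqP => // eq_b; suff : (m <= mnm_of_pt b)%MM by rewrite le_mb.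
by rewrite eq_b; apply/mnm_lepP => k; rewrite mnm_of_ptE ffunE leq_addl.
Qed.

Lemma relvec_pt_add n r (a : pt n) m i b : (r <= a i)%N ->
  relvec r (pt_add a m) i b =
    if (m <= mnm_of_pt b)%MM then relvec r a i (pt_sub b m) else 0.
Proof.
move=> le_ra; rewrite /relvec.
under eq_bigr => j _.
  rewrite shift_pt_add ?sym_pt_add; last by have := ltn_ord j; lia.
  over.
by case: ifP => _ //; rewrite big1 // => j _; rewrite mulr0.
Qed.

Definition in_rel_ideal n r (p : {mpoly Qq[n]}) : Prop := zero_in_V r (coeff_comb p).

Lemma eq_zero_in_V n r (g h : fcomb n) :
  (forall b, g b = h b) -> zero_in_V r g -> zero_in_V r h.
Proof. by move=> eq_gh [s [adm_s g_rel]]; exists s; split=> // b; rewrite -eq_gh. Qed.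

Lemma in_rel_ideal0 n r : in_rel_ideal r (0 : {mpoly Qq[n]}).
Proof. by exists [::]; split=> // b; rewrite /coeff_comb mcoeff0 big_nil. Qed.

Lemma in_rel_idealD n r (p q : {mpoly Qq[n]}) :
  in_rel_ideal r p -> in_rel_ideal r q -> in_rel_ideal r (p + q).
Proof.
move=> [s1 [adm1 p_rel]] [s2 [adm2 q_rel]]; exists (s1 ++ s2).
by rewrite all_cat adm1 adm2; split=> // b; rewrite big_cat /= -p_rel -q_rel /coeff_comb mcoeffD.
Qed.

Lemma in_rel_idealZ n r c (p : {mpoly Qq[n]}) : in_rel_ideal r p -> in_rel_ideal r (c *: p).
Proof.
move=> [s [adm p_rel]]; exists [seq (c * t.1, t.2) | t <- s]; split.
  by rewrite all_map; apply: sub_all adm => t.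
move=> b; rewrite big_map /coeff_comb mcoeffZ -/(coeff_comb p b) p_rel mulr_sumr.
by apply: eq_bigr => t _; rewrite mulrA.
Qed.

(* x^m times the relation at (a, i) is the relation at (a + m, i) *)
Lemma in_rel_idealXM n r (m : 'X_{1..n}) p : in_rel_ideal r p -> in_rel_ideal r ('X_[m] * p).
Proof.
move=> [s [adm p_rel]]; exists [seq (t.1, (pt_add t.2.1 m, t.2.2)) | t <- s]; split.
  rewrite all_map; apply: sub_all adm => t /andP [lt_in le_ra].
  by rewrite /admissible /= lt_in ffunE (leq_trans le_ra) ?leq_addr.
move=> b; rewrite big_map coeff_combXM.
rewrite (eq_big_seq (fun t => if (m <= mnm_of_pt b)%MM
    then t.1 * relvec r t.2.1 t.2.2 (pt_sub b m) else 0)); last first.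
  move=> t /(allP adm) /andP [_ le_ra] /=.
  by rewrite relvec_pt_add //; case: ifP => _; rewrite ?mulr0.
by case: ifP => _; [rewrite p_rel | rewrite big1].
Qed.

Lemma in_rel_ideal_is_ideal n r : is_ideal (@in_rel_ideal n r).
Proof.
split; [exact: in_rel_ideal0 | exact: in_rel_idealD |] => t p p_in.
rewrite (mpolyE t) mulr_suml; elim: (msupp t) => [|m s IH].
  by rewrite big_nil; exact: in_rel_ideal0.
rewrite big_cons; apply: in_rel_idealD => //.
by rewrite -scalerAl; apply/in_rel_idealZ/in_rel_idealXM.
Qed.

Lemma coeff_comb_qbinom_form n (i0 i1 : 'I_n) m (P : nat -> pt n) :
  (forall j, mnm_of_pt (P j) = (U_(i0) *+ (m - j) + U_(i1) *+ j)%MM) ->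
  forall b, coeff_comb (qbinom_form (in_alg {mpoly Qq[n]}) m 'X_i0 'X_i1) b =
    \sum_(j < m.+1) (-1) ^+ j * qbinom m%:Z j * sym (P j) b.
Proof.
move=> P_mnm b; rewrite /coeff_comb /qbinom_form raddf_sum /=; apply: eq_bigr => j _.
rewrite mulr_algl mcoeffZ !mpolyXn -mpolyXD mcoeffX -P_mnm /sym.
by rewrite (inj_eq (@mnm_of_pt_inj _)) eq_sym.
Qed.

Lemma qbinom_form_in_rel_ideal n r (i0 i1 : 'I_n) : val i1 = (val i0).+1 ->
  in_rel_ideal r (qbinom_form (in_alg {mpoly Qq[n]}) r 'X_i0 'X_i1).
Proof.
move=> i1E; pose a : pt n := [ffun k => if k == i0 then r else 0%N].
exists [:: (1, (a, i0))]; split.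
  by rewrite /= /admissible -i1E ltn_ord /a ffunE eqxx leqnn.
move=> b; rewrite big_seq1 mul1r; apply: coeff_comb_qbinom_form => j.
apply/mnmP => k; rewrite mnmDE !mulmnE !mnm1E mnm_of_ptE !ffunE.
rewrite -!val_eqE i1E /= !(eq_sym _ (val k)).
by case: (val k =P val i0) => [->|_]; case: (val k =P (val i0).+1) => _;
  rewrite ?(ltn_eqF (ltnSn _)) /=; lia.
Qed.

Lemma mnm_of_endpt n k m : (0 < n)%N ->
  mnm_of_pt (endpt n.+1 k m) = (U_(inord n) *+ m + U_(inord 0) *+ k)%MM.
Proof.
move=> n_gt0; apply/mnmP => t; rewrite mnmDE !mulmnE !mnm1E mnm_of_ptE ffunE.
rewrite -!val_eqE /= !inordK // !(eq_sym _ (val t)).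
by case: (val t =P 0%N) => [->|_]; case: (val t =P n) => _;
  rewrite ?(gtn_eqF n_gt0) /=; lia.
Qed.

Unset Implicit Arguments.

Theorem proposition5p11 (r n : nat) (hr : (2 <= r)%N) (hn : (2 <= n)%N) :
  let L := ((n - 1) * (r - 1) + 1)%N in
  zero_in_V r
    (fun b : pt n => \sum_(k < L.+1)
        (-1) ^+ k * qbinom L%:Z k * sym (endpt n k (L - k)) b).
Proof.
case: n hn => [|n] // hn L.
pose X i : {mpoly Qq[n.+1]} := 'X_(inord i).
have X_rel i : (i.+1 < n.+1)%N -> in_rel_ideal r (qbinom_prod (in_alg _) r (X i) (X i.+1)).
  by move=> lt_in; rewrite -qbinomial; apply: qbinom_form_in_rel_ideal; rewrite /= !inordK //; lia.
have := qpoch_chain_mem_ideal (in_rel_ideal_is_ideal _ r) X_rel (ltnSn n).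
have -> : (n * (r - 1) + 1 = L)%N by rewrite /L subSS subn0.
have -> : - (n%:Z * (r%:Z - 1)) = 1 - L%:Z by rewrite /L; lia.
rewrite -qbinom_prodE -qbinomial; apply: eq_zero_in_V.
apply: (coeff_comb_qbinom_form (P := fun k => endpt n.+1 k (L - k))) => k.
by rewrite mnm_of_endpt //; lia.
Qed.
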